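(* Let $G$ be a graph of girth at least $4$. Then $G$ is fragile if and only if every subgraph $H$ of $G$ either has at most $2$ vertices or admits an independent cutset of size at most $2$.
   Context: All graphs are finite and simple. A graph is $k$-connected if it has at least $k+1$ vertices and no vertex cutset with at most $k-1$ vertices. A graph is fragile if it has no $3$-connected subgraph. A cutset of a graph $H$ is a set $S\subseteq V(H)$ (possibly empty) such that $H\setminus S$ is disconnected; it is independent if no two vertices of $S$ are adjacent. The girth of a graph is the length of its shortest cycle (infinite if acyclic). *)

From mathcomp Require Import all_boot.
Set Implicit Arguments. Unset Strict Implicit. Unset Printing Implicit Defensive.

Definition simple_graph (T : finType) (e : rel T) : Prop :=
  symmetric e /\ irreflexive e.

Definition subgraph (T : finType) (e : rel T) (S : {set T}) (f : rel T) : Prop :=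
  symmetric f /\ (forall x y, f x y -> e x y) /\
  (forall x y, f x y -> (x \in S) && (y \in S)).

Definition restr (T : finType) (f : rel T) (A : {set T}) : rel T :=
  [rel x y | [&& f x y, x \in A & y \in A]].

Definition disconnected (T : finType) (A : {set T}) (f : rel T) : Prop :=
  exists u v, [/\ u \in A, v \in A & ~~ connect (restr f A) u v].

Definition cutset (T : finType) (S : {set T}) (f : rel T) (X : {set T}) : Prop :=
  X \subset S /\ disconnected (S :\: X) f.

Definition independent (T : finType) (f : rel T) (X : {set T}) : Prop :=
  forall x y, x \in X -> y \in X -> ~~ f x y.

Definition k_connected (T : finType) (k : nat) (S : {set T}) (f : rel T) : Prop :=
  k.+1 <= #|S| /\ ~ (exists X, cutset S f X /\ #|X| <= k.-1).

Definition fragile (T : finType) (e : rel T) : Prop :=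
  ~ (exists S f, subgraph e S f /\ k_connected 3 S f).

(* girth at least 4: no cycle of length 3 (and simple graphs have no
   shorter cycles). *)
Definition girth_ge4 (T : finType) (e : rel T) : Prop :=
  forall x y z, e x y -> e y z -> e z x -> False.

From mathcomp Require Import all_boot.
From Stdlib Require Import Classical.
From mathcomp Require Import zify.

Set Implicit Arguments.
Unset Strict Implicit.
Unset Printing Implicit Defensive.

(* The converse direction is immediate. For the direct one, induct on the
   order of the subgraph H. Fragility (or, on three vertices, a non-edge)
   yields a cutset X of size at most 2; if it is not independent it is an
   edge xy. Let C be a component of H - X. If C is a single vertex u, the
   neighbours of u in X separate u and are independent since G has no
   triangle. Otherwise H[C u X] is smaller, and an independent cutset of it
   given by induction still separates H, because it cannot split the clique X. *)

Section Components.

Variable T : finType.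
Implicit Types (f : rel T) (A B C S X Y : {set T}).

Definition nbr_closed f A C :=
  forall w w', w \in C -> w' \in A -> f w w' -> w' \in C.

Definition component f A u : {set T} := [set w in A | connect (restr f A) u w].

Definition clique f X := {in X &, forall w w', w != w' -> f w w'}.

Lemma restr_sym f A : symmetric f -> symmetric (restr f A).
Proof. by move=> sf x y; rewrite /restr /= sf [X in _ && X]andbC. Qed.

Lemma restr_restr f A B : B \subset A -> restr (restr f A) B =2 restr f B.
Proof.
move=> BA x y; rewrite /restr /=.
by case: (boolP (x \in B)) (boolP (y \in B)) => [/(subsetP BA)-> | _] [/(subsetP BA)-> | _];
  rewrite ?andbF ?andbT.
Qed.

Lemma cutset_restr f S Y : cutset S (restr f S) Y <-> cutset S f Y.
Proof.
rewrite /cutset /disconnected; have DS := subsetDl S Y.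
by split=> -[YS [u [v [uA vA nuv]]]]; split=> //; exists u, v;
  rewrite (eq_connect (restr_restr f DS)) in nuv *.
Qed.

Lemma independent_restr f S Y :
  Y \subset S -> independent (restr f S) Y -> independent f Y.
Proof.
move=> YS indY x y xY yY; have := indY x y xY yY.
by rewrite /restr /= !(subsetP YS) // !andbT.
Qed.

Lemma mem_component f A u : u \in A -> u \in component f A u.
Proof. by move=> uA; rewrite inE uA connect0. Qed.

Lemma component_sub f A u : component f A u \subset A.
Proof. by apply/subsetP => w; rewrite inE => /andP []. Qed.

Lemma component_nbr_closed f A u : nbr_closed f A (component f A u).
Proof.
move=> w w'; rewrite !inE => /andP [wA uw] w'A fww'; rewrite w'A.
by apply: connect_trans uw (connect1 _); rewrite /restr /= fww' wA.
Qed.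

Lemma nbr_closed_disconnected f A C u v :
  u \in A -> v \in A -> u \in C -> v \notin C -> nbr_closed f A C ->
  disconnected A f.
Proof.
move=> uA vA uC vC Cclosed; exists u, v; split=> //; apply: contra vC.
case/connectP => p + ->; elim: p u uC {uA} => //= w p IH u uC.
by case/andP => /and3P [fuw _ wA]; apply: IH (Cclosed u w uC wA fuw).
Qed.

Lemma cutset_nonedge f S p q :
  p \in S -> q \in S -> p != q -> ~~ f p q -> cutset S f (S :\ p :\ q).
Proof.
move=> pS qS pq nfpq; split; first exact: subset_trans (subsetDl _ _) (subsetDl _ _).
apply: (@nbr_closed_disconnected _ _ [set p] p q); rewrite ?inE ?eqxx ?pS ?qS ?andbF //.
- by rewrite eq_sym pq.
- move=> w w'; rewrite !inE => /eqP -> /andP [+ w'S]; rewrite w'S !andbT negb_and !negbK.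
  by case/orP => /eqP -> //; rewrite (negbTE nfpq).
Qed.

Lemma component_le1_isolated f A u :
  irreflexive f -> u \in A -> #|component f A u| <= 1 -> {in A, forall w, ~~ f u w}.
Proof.
move=> fir uA C1 w wA; apply/negP => fuw.
have wC := component_nbr_closed (mem_component f uA) wA fuw.
by move/card_le1_eqP: C1 fuw => /(_ u w (mem_component f uA) wC) ->; rewrite fir.
Qed.

Lemma clique_edge f X x y :
  symmetric f -> x \in X -> y \in X -> x != y -> #|X| <= 2 -> f x y -> clique f X.
Proof.
move=> fsym xX yX xy X2 fxy.
have -> : X = [set x; y].
  apply/eqP; rewrite eq_sym eqEcard cards2 xy X2 andbT.
  by apply/subsetP => w; rewrite !inE => /orP [] /eqP ->.
by move=> w w'; rewrite !inE => /orP [] /eqP -> /orP [] /eqP ->; rewrite ?eqxx // fsym.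
Qed.

Lemma nbhd_cutset f S X u v :
  symmetric f -> girth_ge4 f -> X \subset S -> u \in S :\: X -> v \in S :\: X ->
  u != v -> {in S :\: X, forall w, ~~ f u w} ->
  exists Y, [/\ cutset S f Y, independent f Y & Y \subset X].
Proof.
move=> fsym ftri XS uA vA uv uiso; set Y := [set w in X | f u w].
have YX : Y \subset X by apply/subsetP => w; rewrite inE => /andP [].
have uY : u \notin Y by rewrite inE; case/setDP: uA => _ /negbTE ->.
have vY : v \notin Y by rewrite inE; case/setDP: vA => _ /negbTE ->.
exists Y; split=> //.
- split; first exact: subset_trans YX XS.
  apply: (@nbr_closed_disconnected _ _ [set u] u v).
  + by rewrite in_setD uY; case/setDP: uA.
  + by rewrite in_setD vY; case/setDP: vA.
  + exact: set11.
  + by rewrite in_set1 eq_sym.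
  move=> w w'; rewrite in_set1 => /eqP -> /setDP [w'S w'Y] fuw'.
  case: (boolP (w' \in X)) => w'X; first by move: w'Y; rewrite /Y inE w'X fuw'.
  by move: (uiso w'); rewrite in_setD w'X w'S fuw' => /(_ isT).
- move=> p q; rewrite !inE => /andP [_ fup] /andP [_ fuq]; apply/negP => fpq.
  by apply: (ftri u p q) => //; rewrite fsym.
Qed.

(* A cutset of the piece [C :|: X] cut off by the clique [X] is also a cutset
   of the whole graph: some side of it misses [X] entirely, hence lies in [C],
   whose neighbours all stay inside [C :|: X]. *)
Lemma clique_cutset_lift f S X C Y v :
  symmetric f -> clique f X -> C :|: X \subset S -> nbr_closed f (S :\: X) C ->
  v \in S :\: (C :|: X) -> cutset (C :|: X) f Y -> cutset S f Y.
Proof.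
move=> fsym Xcl S1S Cclosed /setDP [vS vS1] [YS1 [a [b [aA bA nab]]]].
set A1 := (C :|: X) :\: Y; set r := restr f A1.
have rsym := sym_connect_sym (restr_sym A1 fsym).
have XY_conn : {in X :\: Y &, forall w w', connect r w w'}.
  move=> w w' /setDP [wX wY] /setDP [w'X w'Y]; have [-> //|ww'] := eqVneq w w'.
  by apply: connect1; rewrite /r /restr /= Xcl // !inE wX w'X wY w'Y !orbT.
have [a' [a'A1 a'X]] : exists a', a' \in A1 /\ {in X :\: Y, forall w, ~~ connect r a' w}.
  case: (boolP [exists w in X :\: Y, connect r a w]) => [/exists_inP [w wXY aw]|naX].
    exists b; split=> // w' w'XY; apply: contra nab => bw'.
    by rewrite (connect_trans aw) // (connect_trans (XY_conn _ _ wXY w'XY)) // rsym.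
  by exists a; split=> // w wXY; apply: contra naX => aw; apply/exists_inP; exists w.
set D := component f A1 a'.
have DC : {subset D <= C}.
  move=> w wD; have /setDP [] := subsetP (component_sub f A1 a') w wD.
  rewrite inE => /orP [//|wX] wY; move: wD; rewrite inE => /andP [_ aw].
  by move: (a'X w); rewrite inE wX wY aw => /(_ isT).
have DS : D \subset S.
  exact: subset_trans (component_sub f A1 a') (subset_trans (subsetDl _ _) S1S).
split; first exact: subset_trans YS1 S1S.
apply: (@nbr_closed_disconnected _ _ D a' v).
- by rewrite inE (subsetP DS) ?mem_component // andbT; case/setDP: a'A1.
- by rewrite inE vS andbT; apply: contra vS1; apply: (subsetP YS1).
- exact: mem_component.
- by apply: contra vS1 => /(subsetP (component_sub f A1 a')) /setDP [].
move=> w w' wD /setDP [w'S w'Y] fww'.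
have w'A1 : w' \in A1.
  rewrite /A1 in_setD w'Y in_setU orbC; case: (boolP (w' \in X)) => //= w'X.
  by apply: (Cclosed w) fww'; [exact: DC | rewrite in_setD w'X].
exact: component_nbr_closed wD w'A1 fww'.
Qed.

End Components.

Lemma subgraph_restr (T : finType) (e f : rel T) (S A : {set T}) :
  subgraph e S f -> A \subset S -> subgraph e A (restr f A).
Proof.
move=> [fsym [fe _]] AS; split; first exact: restr_sym.
by split=> x y /and3P [fxy xA yA]; [exact: fe | rewrite xA yA].
Qed.

Lemma subgraph_girth_ge4 (T : finType) (e f : rel T) (S : {set T}) :
  girth_ge4 e -> subgraph e S f -> girth_ge4 f.
Proof. by move=> e_tri [_ [fe _]] x y z /fe exy /fe eyz /fe ezx; apply: e_tri exy eyz ezx. Qed.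

Lemma triangle_free_nonedge (T : finType) (f : rel T) (S : {set T}) :
  girth_ge4 f -> 2 < #|S| -> exists p q, [/\ p \in S, q \in S, p != q & ~~ f p q].
Proof.
move=> ftri /card_gt2P [a [b [c [[aS bS cS] [ab bc ca]]]]].
case fab: (f a b); last by exists a, b; rewrite fab.
case fbc: (f b c); last by exists b, c; rewrite fbc.
case fca: (f c a); last by exists c, a; rewrite fca.
by case: (ftri a b c).
Qed.

Section Fragile.

Variables (T : finType) (e : rel T).
Hypotheses (e_simple : simple_graph e) (e_tri : girth_ge4 e) (e_fragile : fragile e).

Lemma fragile_small_cutset (S : {set T}) (f : rel T) :
  subgraph e S f -> 2 < #|S| -> exists X, cutset S f X /\ #|X| <= 2.
Proof.
move=> sub S3.
case: (leqP 4 #|S|) => S4.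
  by apply: NNPP => noX; apply: e_fragile; exists S, f.
have [p [q [pS qS pq nfpq]]] := triangle_free_nonedge (subgraph_girth_ge4 e_tri sub) S3.
exists (S :\ p :\ q); split; first exact: cutset_nonedge.
by move: S4; rewrite (cardsD1 p) pS (cardsD1 q (S :\ p)) !inE eq_sym pq qS; lia.
Qed.

Lemma fragile_independent_cutset (S : {set T}) (f : rel T) :
  subgraph e S f -> 2 < #|S| ->
  exists X, [/\ cutset S f X, independent f X & #|X| <= 2].
Proof.
have [n] := ubnP #|S|; elim: n => // n IH in S f *; rewrite ltnS => Sn sub S3.
have [fsym [fe _]] := sub.
have fir : irreflexive f by move=> x; apply/negP => /fe; rewrite e_simple.2.
have [X [cutX X2]] := fragile_small_cutset sub S3.
have [XS [u [v [uA vA nuv]]]] := cutX.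
case: (boolP [exists x in X, exists y in X, f x y]); last first.
  move=> noedge; exists X; split=> // x y xX yX; apply: contra noedge => fxy.
  by apply/exists_inP; exists x => //; apply/exists_inP; exists y.
case/exists_inP => x xX /exists_inP [y yX fxy].
have xy : x != y by apply: contraTneq fxy => ->; rewrite fir.
set C := component f (S :\: X) u.
have [C1 | C2] := leqP #|C| 1.
  have uv : u != v by apply: contraNneq nuv => ->; exact: connect0.
  have [Y [cutY indY YX]] := nbhd_cutset fsym (subgraph_girth_ge4 e_tri sub) XS uA vA uv
    (component_le1_isolated fir uA C1).
  by exists Y; split=> //; apply: leq_trans (subset_leq_card YX) X2.
have CS : C :|: X \subset S.
  by rewrite subUset XS andbT (subset_trans (component_sub _ _ _)) ?subsetDl.
have vS1 : v \in S :\: (C :|: X).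
  case/setDP: vA => vS vX; rewrite in_setD in_setU negb_or vX vS !andbT.
  by rewrite /C inE (negbTE nuv) andbF.
have [|||Y [cutY indY Y2]] := IH (C :|: X) (restr f (C :|: X)).
- apply: leq_trans Sn; apply: proper_card; apply/properP; split=> //.
  by exists v; case/setDP: vS1.
- exact: subgraph_restr sub CS.
- apply: leq_ltn_trans C2 (proper_card _); apply/properP; split; first exact: subsetUl.
  exists x; first by rewrite inE xX orbT.
  by apply: contraL xX => /(subsetP (component_sub _ _ _)) /setDP [].
have YS1 : Y \subset C :|: X by case: cutY.
exists Y; split=> //; last exact: independent_restr indY.
apply: (clique_cutset_lift fsym (clique_edge fsym xX yX xy X2 fxy) CS _ vS1).
- exact: component_nbr_closed.
- by rewrite -cutset_restr.
Qed.

End Fragile.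

Theorem mainTheorem9 (T : finType) (e : rel T) :
  simple_graph e -> girth_ge4 e ->
  (fragile e <->
   (forall (S : {set T}) (f : rel T), subgraph e S f ->
      #|S| <= 2 \/
      exists X : {set T}, [/\ cutset S f X, independent f X & #|X| <= 2])).
Proof.
move=> e_simple e_tri; split.
  move=> e_fragile S f sub; case: (leqP #|S| 2) => S3; first by left.
  by right; apply: (fragile_independent_cutset e_simple e_tri e_fragile sub S3).
move=> H [S [f [sub [S4 noX]]]].
case: (H S f sub) => [S2 | [X [cutX _ X2]]]; first by have := leq_trans S4 S2.
by apply: noX; exists X.
Qed.
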